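(* Let $P,Q\in\mathbb P_d$ and let $R=\gamma^{\mathrm{BW}}_{PQ}(t)$ for some $t\in[0,1]$. Then $\operatorname{F}_R(P,Q)=\operatorname{F}^{\mathrm U}(P,Q)$.
   Context: $\mathbb P_d$ is the set of $d\times d$ complex positive definite matrices; $A\#B:=A^{1/2}(A^{-1/2}BA^{-1/2})^{1/2}A^{1/2}$ is the matrix geometric mean. The Bures–Wasserstein geodesic between $A,B\in\mathbb P_d$ is $\gamma^{\mathrm{BW}}_{AB}(t):=[(1-t)\mathbb I+t\,A^{-1}\#B]\,A\,[(1-t)\mathbb I+t\,A^{-1}\#B]$, $t\in[0,1]$. The generalized fidelity is $\operatorname{F}_R(P,Q):=\operatorname{Tr}\big[\sqrt{R^{1/2}PR^{1/2}}\,R^{-1}\sqrt{R^{1/2}QR^{1/2}}\big]$, and the Uhlmann fidelity is $\operatorname{F}^{\mathrm U}(P,Q):=\operatorname{Tr}\sqrt{P^{1/2}QP^{1/2}}$. *)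

From HB Require Import structures.
From mathcomp Require Import all_boot all_order all_algebra.
From mathcomp Require Import complex.
From Stdlib Require Import ClassicalEpsilon.
Set Implicit Arguments. Unset Strict Implicit. Unset Printing Implicit Defensive.
Import Order.TTheory GRing.Theory Num.Theory.
Local Open Scope ring_scope.

Section Defs.
Variable R : rcfType.
Local Notation C := R[i].
Variable d : nat.

Definition adjmx (A : 'M[C]_d) : 'M[C]_d := (map_mx Num.conj A)^T.

Definition hermitian (A : 'M[C]_d) : Prop := adjmx A = A.

Definition psdmx (A : 'M[C]_d) : Prop :=
  hermitian A /\
  forall v : 'cV[C]_d, 0 <= ((map_mx Num.conj v)^T *m A *m v) ord0 ord0.

Definition pdmx (A : 'M[C]_d) : Prop :=
  hermitian A /\
  forall v : 'cV[C]_d, v != 0 -> 0 < ((map_mx Num.conj v)^T *m A *m v) ord0 ord0.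

(* the (unique) positive semidefinite square root of A, when A is PSD;
   chosen by classical description (an arbitrary matrix otherwise). *)
Definition sqrtmx (A : 'M[C]_d) : 'M[C]_d :=
  epsilon (inhabits 0) (fun S => psdmx S /\ S *m S = A).

Definition isqrtmx (A : 'M[C]_d) : 'M[C]_d := invmx (sqrtmx A).

Definition gmean (A B : 'M[C]_d) : 'M[C]_d :=
  sqrtmx A *m sqrtmx (isqrtmx A *m B *m isqrtmx A) *m sqrtmx A.

Definition bw_geodesic (A B : 'M[C]_d) (t : R) : 'M[C]_d :=
  let M := (1 - (t%:C)%C) *: 1%:M + (t%:C)%C *: gmean (invmx A) B in
  M *m A *m M.

Definition gen_fidelity (Rm P Q : 'M[C]_d) : C :=
  \tr (sqrtmx (sqrtmx Rm *m P *m sqrtmx Rm) *m invmx Rm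
       *m sqrtmx (sqrtmx Rm *m Q *m sqrtmx Rm)).

Definition uhlmann_fidelity (P Q : 'M[C]_d) : C :=
  \tr (sqrtmx (sqrtmx P *m Q *m sqrtmx P)).

End Defs.

(* Let G := P^{-1} # Q, the unique positive definite solution of the Riccati
   equation G P G = Q, and M := (1 - t) I + t G, so that the geodesic point is
   R = M P M.  Whenever S is positive semidefinite and S R S = X, the square
   root of R^{1/2} X R^{1/2} is R^{1/2} S R^{1/2}.  Applying this to
   P = M^{-1} R M^{-1} and Q = (G M^{-1}) R (G M^{-1}) (G and M commute) turns
   F_R(P, Q) into Tr(M^{-1} G M^{-1} R) = Tr(G P); applying it to
   Q = G P G turns F^U(P, Q) into Tr(G P) as well. *)
From mathcomp Require Import all_boot all_order all_algebra complex spectral.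
From Stdlib Require Import ClassicalEpsilon.
Set Implicit Arguments. Unset Strict Implicit. Unset Printing Implicit Defensive.
Import Order.TTheory GRing.Theory Num.Theory.
Local Open Scope ring_scope.

Section PositiveMatrices.
Variable R : rcfType.
Local Notation C := R[i].

(* [adjmx] for rectangular matrices, so that it applies to vectors *)
Definition adj m n (A : 'M[C]_(m, n)) : 'M[C]_(n, m) := (map_mx Num.conj A)^T.

Lemma adj_mul m n p (A : 'M[C]_(m, n)) (B : 'M[C]_(n, p)) :
  adj (A *m B) = adj B *m adj A.
Proof. by rewrite /adj map_mxM trmx_mul. Qed.

Lemma adjK m n (A : 'M[C]_(m, n)) : adj (adj A) = A.
Proof. by apply/matrixP=> i j; rewrite !mxE conjCK. Qed.

Lemma adjD m n (A B : 'M[C]_(m, n)) : adj (A + B) = adj A + adj B.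
Proof. by apply/matrixP=> i j; rewrite !mxE rmorphD. Qed.

Lemma adjN m n (A : 'M[C]_(m, n)) : adj (- A) = - adj A.
Proof. by apply/matrixP=> i j; rewrite !mxE rmorphN. Qed.

Lemma adjZ m n c (A : 'M[C]_(m, n)) : adj (c *: A) = c^* *: adj A.
Proof. by apply/matrixP=> i j; rewrite !mxE rmorphM. Qed.

Lemma adj1 n : adj (1%:M : 'M[C]_n) = 1%:M.
Proof. by apply/matrixP=> i j; rewrite !mxE rmorphMn rmorph1 eq_sym. Qed.

Lemma adj_delta n (i : 'I_n) : adj (delta_mx i 0 : 'cV[C]_n) = delta_mx 0 i.
Proof.
by apply/matrixP=> a b; rewrite !mxE; case: (a == 0); case: (b == i);
  rewrite /= ?rmorph1 ?rmorph0.
Qed.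

Lemma adj_invmx n (A : 'M[C]_n) : adj (invmx A) = invmx (adj A).
Proof. by rewrite /adj (map_invmx Num.conj) trmx_inv. Qed.

Lemma adj_mulmx_self_ge0 n (u : 'cV[C]_n) : 0 <= (adj u *m u) 0 0.
Proof.
by rewrite !mxE; apply: sumr_ge0 => j _; rewrite !mxE mulrC mul_conjC_ge0.
Qed.

Lemma adj_mulmx_self_eq0 n (u : 'cV[C]_n) : (adj u *m u) 0 0 = 0 -> u = 0.
Proof.
rewrite !mxE => /psumr_eq0P u0; apply/matrixP => j k; rewrite ord1 mxE.
have terms_ge0 (i : 'I_n) : true -> 0 <= adj u 0 i * u i 0.
  by rewrite !mxE mulrC mul_conjC_ge0.
by have /eqP := u0 terms_ge0 j isT; rewrite !mxE mulf_eq0 conjC_eq0 orbb => /eqP.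
Qed.

Lemma psdmxE n (A : 'M[C]_n) :
  psdmx A <-> adj A = A /\ forall v : 'cV[C]_n, 0 <= (adj v *m A *m v) 0 0.
Proof. by []. Qed.

Lemma pdmxE n (A : 'M[C]_n) :
  pdmx A <-> adj A = A /\ forall v : 'cV[C]_n, v != 0 -> 0 < (adj v *m A *m v) 0 0.
Proof. by []. Qed.

Lemma psdmx_adj n (A : 'M[C]_n) : psdmx A -> adj A = A.
Proof. by case. Qed.

Lemma pdmx_adj n (A : 'M[C]_n) : pdmx A -> adj A = A.
Proof. by case. Qed.

Lemma pdmx_psd n (A : 'M[C]_n) : pdmx A -> psdmx A.
Proof.
move=> [hA qA]; split=> // v; have [->|v0] := eqVneq v 0; last exact/ltW/qA.
by rewrite mulmx0 mxE.
Qed.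

Lemma pdmx_unit n (A : 'M[C]_n) : pdmx A -> A \in unitmx.
Proof.
move=> [_ qA]; rewrite -unitmx_tr -row_free_unit; apply: inj_row_free => v vA.
apply/trmx_inj; rewrite trmx0; apply/eqP; apply: contraT => v0.
have Av : A *m v^T = 0 by rewrite -[A]trmxK -trmx_mul vA trmx0.
by have := qA _ v0; rewrite -mulmxA Av mulmx0 mxE ltxx.
Qed.

Lemma psdmx_congr n (A X : 'M[C]_n) : psdmx A -> psdmx (adj X *m A *m X).
Proof.
move=> /psdmxE[hA qA]; apply/psdmxE; split; first by rewrite !adj_mul adjK hA mulmxA.
by move=> v; have := qA (X *m v); rewrite adj_mul !mulmxA.
Qed.

Lemma pdmx_congr n (A X : 'M[C]_n) :
  pdmx A -> X \in unitmx -> pdmx (adj X *m A *m X).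
Proof.
move=> pdA Xu; have [hXAX _] := psdmx_congr X (pdmx_psd pdA).
move: pdA => /pdmxE[_ qA]; apply/pdmxE; split=> // v v0.
have Xv0 : X *m v != 0.
  by apply: contra v0 => /eqP Xv0; rewrite -(mulKmx Xu v) Xv0 mulmx0.
by have := qA _ Xv0; rewrite adj_mul !mulmxA.
Qed.

Lemma psdmxD n (A B : 'M[C]_n) : psdmx A -> psdmx B -> psdmx (A + B).
Proof.
move=> /psdmxE[hA qA] /psdmxE[hB qB]; apply/psdmxE; split; first by rewrite adjD hA hB.
by move=> v; rewrite mulmxDr mulmxDl mxE addr_ge0.
Qed.

Lemma pdmxDl n (A B : 'M[C]_n) : pdmx A -> psdmx B -> pdmx (A + B).
Proof.
move=> /pdmxE[hA qA] /psdmxE[hB qB]; apply/pdmxE; split; first by rewrite adjD hA hB.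
by move=> v v0; rewrite mulmxDr mulmxDl mxE ltr_wpDr ?qA.
Qed.

Lemma psdmxZ n c (A : 'M[C]_n) : 0 <= c -> psdmx A -> psdmx (c *: A).
Proof.
move=> c0 /psdmxE[hA qA]; apply/psdmxE; split; first by rewrite adjZ hA geC0_conj.
by move=> v; rewrite -scalemxAr -scalemxAl mxE mulr_ge0.
Qed.

Lemma pdmxZ n c (A : 'M[C]_n) : 0 < c -> pdmx A -> pdmx (c *: A).
Proof.
move=> c0 /pdmxE[hA qA]; apply/pdmxE; split; first by rewrite adjZ hA geC0_conj ?ltW.
by move=> v v0; rewrite -scalemxAr -scalemxAl mxE mulr_gt0 ?qA.
Qed.

Lemma pdmx1 n : pdmx (1%:M : 'M[C]_n).
Proof.
split; first exact: adj1.
move=> v v0; rewrite mulmx1 lt_def adj_mulmx_self_ge0 andbT.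
by apply: contra v0 => /eqP/adj_mulmx_self_eq0->.
Qed.

Lemma pdmx_inv n (A : 'M[C]_n) : pdmx A -> pdmx (invmx A).
Proof.
move=> pdA; have Au := pdmx_unit pdA; have hA : adj A = A := pdA.1.
have -> : invmx A = adj (invmx A) *m A *m invmx A.
  by rewrite adj_invmx hA mulVmx // mul1mx.
by apply: pdmx_congr; rewrite ?unitmx_inv.
Qed.

Lemma hermitian_spectral n (A : 'M[C]_n) : adj A = A ->
  exists V (s : 'rV[C]_n), [/\ V *m adj V = 1%:M, adj V *m V = 1%:M &
    A = adj V *m diag_mx s *m V].
Proof.
move=> hA; have /orthomx_spectralP eA : A \is normalmx.
  by apply/normalmxP; rewrite -map_trmx -/(adj A) hA.
have Vu := spectral_unitarymx A.
have iV : invmx (spectralmx A) = adj (spectralmx A).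
  by rewrite invmx_unitary // -map_trmx -/(adj _).
exists (spectralmx A), (spectral_diag A).
by rewrite -iV mulmxV ?mulVmx ?unitarymx_unit.
Qed.

Section UnitaryBasis.
Variables (n : nat) (V : 'M[C]_n).
Hypothesis VVadj : V *m adj V = 1%:M.
Local Notation e_ i := (delta_mx i 0 : 'cV[C]_n).

Lemma unitary_col_norm (i : 'I_n) :
  (adj (adj V *m e_ i) *m (adj V *m e_ i)) 0 0 = 1.
Proof.
by rewrite adj_mul adjK mulmxA -(mulmxA _ V) VVadj mulmx1 adj_delta mul_delta_mx mxE !eqxx.
Qed.

Lemma spectral_eigenvector (s : 'rV[C]_n) (i : 'I_n) :
  adj V *m diag_mx s *m V *m (adj V *m e_ i)
  = s 0 i *: (adj V *m e_ i).
Proof.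
rewrite !mulmxA -(mulmxA _ V) VVadj mulmx1 -mulmxA scalemxAr; congr (_ *m _).
apply/matrixP=> a b; rewrite mul_diag_mx !mxE.
by have [->|] := eqVneq a i; rewrite ?mulr0.
Qed.

Lemma spectral_eigenvalueE (s : 'rV[C]_n) (i : 'I_n) (v := adj V *m e_ i) :
  (adj v *m (adj V *m diag_mx s *m V) *m v) 0 0 = s 0 i.
Proof.
by rewrite /v -mulmxA spectral_eigenvector -scalemxAr mxE unitary_col_norm mulr1.
Qed.

End UnitaryBasis.

Lemma psdmx_diag n (s : 'rV[C]_n) : (forall i, 0 <= s 0 i) -> psdmx (diag_mx s).
Proof.
move=> s0; apply/psdmxE; split.
  apply/matrixP=> a b; rewrite !mxE; have [->|_] := eqVneq b a.
    by rewrite !mulr1n geC0_conj.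
  by rewrite !mulr0n rmorph0.
move=> v; rewrite mul_mx_diag mxE; apply: sumr_ge0 => j _; rewrite !mxE.
by rewrite mulrAC mulr_ge0 // mulrC mul_conjC_ge0.
Qed.

Lemma psdmx_sqrt_exists n (A : 'M[C]_n) :
  psdmx A -> exists S, psdmx S /\ S *m S = A.
Proof.
move=> psdA; have [V [s [VVadj _ eA]]] := hermitian_spectral psdA.1.
have s0 i : 0 <= s 0 i by rewrite -(spectral_eigenvalueE VVadj s i) -eA; apply: psdA.2.
exists (adj V *m diag_mx (map_mx sqrtC s) *m V); split.
  by apply: psdmx_congr; apply: psdmx_diag => i; rewrite mxE sqrtC_ge0.
rewrite eA -!mulmxA (mulmxA V) VVadj mul1mx (mulmxA (diag_mx _)) mulmx_diag.
by congr (_ *m (diag_mx _ *m _)); apply/rowP => j; rewrite !mxE -expr2 sqrtCK.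
Qed.

Section SquareRootUniqueness.
Variables (n : nat) (S T : 'M[C]_n).
Hypotheses (psdS : psdmx S) (psdT : psdmx T) (eST : S *m S = T *m T).

Let adj_diff : adj (S - T) = S - T.
Proof. by rewrite adjD adjN !psdmx_adj. Qed.

(* With a := v^* S v and b := v^* T v, the eigenvalue is a - b and
   0 = v^* (S S - T T) v = v^* (S (S - T) + (S - T) T) v = mu (a + b),
   which forces mu = 0 since a, b >= 0. *)
Lemma psdmx_sqr_eq_eigenvalue0 (v : 'cV[C]_n) (mu : C) :
  (adj v *m v) 0 0 = 1 -> (S - T) *m v = mu *: v -> mu = 0.
Proof.
move=> v1 Dv; set a := (adj v *m S *m v) 0 0; set b := (adj v *m T *m v) 0 0.
have a0 : 0 <= a by apply: psdS.2.
have b0 : 0 <= b by apply: psdT.2.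
have muE : mu = a - b.
  have -> : mu = (adj v *m (mu *: v)) 0 0 by rewrite -scalemxAr mxE v1 mulr1.
  by rewrite -Dv mulmxA mulmxBr mulmxBl /a /b !mxE.
have vD : adj v *m (S - T) = mu^* *: adj v by rewrite -adj_diff -adj_mul Dv adjZ.
have muR : mu^* = mu by rewrite muE rmorphB /= !geC0_conj.
have : 0 = mu * a + mu * b.
  have -> : 0 = (adj v *m (S *m S - T *m T) *m v) 0 0.
    by rewrite eST subrr mulmx0 mul0mx mxE.
  have -> : S *m S - T *m T = S *m (S - T) + (S - T) *m T.
    by rewrite mulmxBr mulmxBl addrA subrK.
  have SD : (adj v *m (S *m (S - T)) *m v) 0 0 = mu * a.
    by rewrite -!mulmxA Dv -!scalemxAr mxE !mulmxA.
  have DT : (adj v *m ((S - T) *m T) *m v) 0 0 = mu * b.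
    by rewrite mulmxA vD -!scalemxAl mxE muR.
  by rewrite mulmxDr mulmxDl mxE SD DT.
move/esym/eqP; rewrite -mulrDr mulf_eq0 => /orP[/eqP //|].
by rewrite paddr_eq0 // muE => /andP[/eqP-> /eqP->]; rewrite subrr.
Qed.

Lemma psdmx_sqr_inj : S = T.
Proof.
have [W [mu [WWadj _ eD]]] := hermitian_spectral adj_diff.
suff mu0 : mu = 0.
  by apply/eqP; rewrite -subr_eq0 eD mu0 linear0 mulmx0 mul0mx.
apply/rowP => i; rewrite mxE; apply: (psdmx_sqr_eq_eigenvalue0 (v := adj W *m delta_mx i 0)).
  exact: unitary_col_norm.
by rewrite eD spectral_eigenvector.
Qed.

End SquareRootUniqueness.

Lemma invmx_eq n (A B : 'M[C]_n) : A *m B = 1%:M -> invmx A = B.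
Proof.
move=> AB; have [Au _] := mulmx1_unit AB.
by rewrite -[LHS]mulmx1 -AB mulmxA mulVmx // mul1mx.
Qed.

Lemma sqrtmx_spec n (A : 'M[C]_n) :
  psdmx A -> psdmx (sqrtmx A) /\ sqrtmx A *m sqrtmx A = A.
Proof. by move/psdmx_sqrt_exists/(epsilon_spec (inhabits 0)). Qed.

Lemma sqrtmx_sqr n (S : 'M[C]_n) : psdmx S -> sqrtmx (S *m S) = S.
Proof.
move=> psdS; have psdSS : psdmx (S *m S).
  rewrite -{1}(psdmx_adj psdS) -(mulmx1 (adj S)).
  exact/psdmx_congr/pdmx_psd/pdmx1.
by have [psdR RR] := sqrtmx_spec psdSS; apply: psdmx_sqr_inj.
Qed.

Lemma psdmx_unit_pd n (A : 'M[C]_n) : psdmx A -> A \in unitmx -> pdmx A.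
Proof.
move=> psdA Au; have [psdS SS] := sqrtmx_spec psdA.
split=> [|v v0]; first exact: psdA.1.
rewrite lt_def psdA.2 andbT; apply: contra v0 => /eqP vAv0.
have /adj_mulmx_self_eq0 Sv0 : (adj (sqrtmx A *m v) *m (sqrtmx A *m v)) 0 0 = 0.
  by rewrite adj_mul psdmx_adj // !mulmxA -(mulmxA _ (sqrtmx A) (sqrtmx A)) SS.
by apply/eqP; rewrite -(mulKmx Au v) -SS -mulmxA Sv0 !mulmx0.
Qed.

Lemma sqrtmx_pd n (A : 'M[C]_n) : pdmx A -> pdmx (sqrtmx A).
Proof.
move=> pdA; have [psdS SS] := sqrtmx_spec (pdmx_psd pdA).
apply: psdmx_unit_pd => //; have := pdmx_unit pdA.
by rewrite -{1}SS unitmx_mul => /andP[].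
Qed.

Lemma sqrtmx_sandwich n (X S : 'M[C]_n) :
  adj X = X -> psdmx S -> sqrtmx (X *m (S *m (X *m X) *m S) *m X) = X *m S *m X.
Proof.
move=> hX psdS; have psdXSX : psdmx (X *m S *m X).
  by rewrite -{1}hX; apply: psdmx_congr.
by rewrite -[RHS](sqrtmx_sqr psdXSX) !mulmxA.
Qed.

Lemma uhlmann_fidelity_sandwich n (P Q S : 'M[C]_n) :
  psdmx P -> psdmx S -> S *m P *m S = Q -> uhlmann_fidelity P Q = \tr (S *m P).
Proof.
move=> psdP psdS <-; have [psdp pp] := sqrtmx_spec psdP.
rewrite /uhlmann_fidelity; move: (sqrtmx P) psdp pp => p psdp <-.
by rewrite sqrtmx_sandwich ?psdmx_adj // -mulmxA mxtrace_mulC mulmxA.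
Qed.

Lemma gen_fidelity_sandwich n (Rm P Q S T : 'M[C]_n) :
  pdmx Rm -> psdmx S -> psdmx T -> S *m Rm *m S = P -> T *m Rm *m T = Q ->
  gen_fidelity Rm P Q = \tr (S *m T *m Rm).
Proof.
move=> pdR psdS psdT <- <-; have [psdr rr] := sqrtmx_spec (pdmx_psd pdR).
have ru : sqrtmx Rm \in unitmx by exact/pdmx_unit/sqrtmx_pd.
rewrite /gen_fidelity; move: (sqrtmx Rm) psdr rr ru => r psdr <- ru.
have iR : invmx (r *m r) = invmx r *m invmx r.
  by apply: invmx_eq; rewrite mulmxA (mulmxK ru) mulmxV.
rewrite !sqrtmx_sandwich ?psdmx_adj // iR !mulmxA (mulmxK ru) (mulmxKV ru).
by rewrite -[in RHS]mulmxA [in RHS]mxtrace_mulC [in LHS]mxtrace_mulC !mulmxA.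
Qed.

Section GeometricMean.
Variables (n : nat) (A B : 'M[C]_n).
Hypotheses (pdA : pdmx A) (pdB : pdmx B).

Lemma isqrtmx_pd : pdmx (isqrtmx A).
Proof. exact/pdmx_inv/sqrtmx_pd. Qed.

Lemma isqrtmx_congr_pd : pdmx (isqrtmx A *m B *m isqrtmx A).
Proof.
rewrite -{1}(pdmx_adj isqrtmx_pd); exact: pdmx_congr (pdmx_unit isqrtmx_pd).
Qed.

Lemma gmean_pd : pdmx (gmean A B).
Proof.
rewrite /gmean -{1}(pdmx_adj (sqrtmx_pd pdA)).
exact: pdmx_congr (sqrtmx_pd isqrtmx_congr_pd) (pdmx_unit (sqrtmx_pd pdA)).
Qed.

Lemma gmean_riccati : gmean A B *m invmx A *m gmean A B = B.
Proof.
have [_ aa] := sqrtmx_spec (pdmx_psd pdA).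
have au := pdmx_unit (sqrtmx_pd pdA).
have iA : invmx A = isqrtmx A *m isqrtmx A.
  by apply: invmx_eq; rewrite -{1}aa /isqrtmx mulmxA (mulmxK au) mulmxV.
have [_] := sqrtmx_spec (pdmx_psd isqrtmx_congr_pd).
rewrite /gmean iA /isqrtmx; move: (sqrtmx _) => X XX.
rewrite !mulmxA (mulmxK au) (mulmxKV au) -(mulmxA _ X X) XX !mulmxA.
by rewrite (mulmxV au) mul1mx (mulmxKV au).
Qed.

End GeometricMean.

Definition bw_factor n (G : 'M[C]_n) (t : R) : 'M[C]_n :=
  (1 - (t%:C)%C) *: 1%:M + (t%:C)%C *: G.

Lemma bw_geodesicE n (A B : 'M[C]_n) t :
  bw_geodesic A B t
  = bw_factor (gmean (invmx A) B) t *m A *m bw_factor (gmean (invmx A) B) t.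
Proof. by []. Qed.

Section GeodesicFactor.
Variables (n : nat) (G : 'M[C]_n) (t : R).
Hypotheses (pdG : pdmx G) (t0 : 0 <= t) (t1 : t <= 1).

Let tC_ge0 : 0 <= (t%:C)%C.
Proof. by rewrite -[0]/(0%:C)%C lecR. Qed.

Let subC1t_ge0 : 0 <= 1 - (t%:C)%C.
Proof. by rewrite subr_ge0 -[1]/(1%:C)%C lecR. Qed.

Lemma bw_factor_pd : pdmx (bw_factor G t).
Proof.
rewrite /bw_factor; have [->|t_neq1] := eqVneq t 1.
  by rewrite -[(1%:C)%C]/(1 : C) subrr scale0r add0r scale1r.
have subC1t_gt0 : 0 < 1 - (t%:C)%C.
  by rewrite subr_gt0 -[1]/(1%:C)%C ltcR lt_def eq_sym t_neq1.
exact: pdmxDl (pdmxZ subC1t_gt0 (pdmx1 _)) (psdmxZ tC_ge0 (pdmx_psd pdG)).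
Qed.

Lemma bw_factor_comm : G *m bw_factor G t = bw_factor G t *m G.
Proof. by rewrite mulmxDr mulmxDl -!scalemxAr -!scalemxAl mulmx1 mul1mx. Qed.

Lemma bw_factor_inv_psd : psdmx (G *m invmx (bw_factor G t)).
Proof.
have pdM := bw_factor_pd; have Mu := pdmx_unit pdM.
have -> : G *m invmx (bw_factor G t)
    = adj (invmx (bw_factor G t)) *m (bw_factor G t *m G) *m invmx (bw_factor G t).
  by rewrite adj_invmx pdmx_adj // !mulmxA (mulVmx Mu) mul1mx.
apply: psdmx_congr.
have -> : bw_factor G t *m G = (1 - (t%:C)%C) *: G + (t%:C)%C *: (adj G *m 1%:M *m G).
  by rewrite mulmxDl -!scalemxAl mul1mx mulmx1 pdmx_adj.
apply: psdmxD; apply: psdmxZ => //; first exact: pdmx_psd.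
exact/psdmx_congr/pdmx_psd/pdmx1.
Qed.

Lemma gen_fidelity_bw_factor (P Q : 'M[C]_n) : pdmx P -> G *m P *m G = Q ->
  gen_fidelity (bw_factor G t *m P *m bw_factor G t) P Q = \tr (G *m P).
Proof.
move=> pdP GPG; have pdM := bw_factor_pd; have Mu := pdmx_unit pdM.
have pdMPM : pdmx (bw_factor G t *m P *m bw_factor G t).
  by rewrite -{1}(pdmx_adj pdM); apply: pdmx_congr.
rewrite (gen_fidelity_sandwich (S := invmx (bw_factor G t))
                               (T := G *m invmx (bw_factor G t)) pdMPM).
- by rewrite !mulmxA mxtrace_mulC !mulmxA (mulmxV Mu) mul1mx (mulmxKV Mu).
- exact/pdmx_psd/pdmx_inv.
- exact: bw_factor_inv_psd.
- by rewrite !mulmxA (mulVmx Mu) mul1mx (mulmxK Mu).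
- rewrite !mulmxA (mulmxKV Mu) -(mulmxA _ _ G) -bw_factor_comm.
  by rewrite !mulmxA (mulmxK Mu).
Qed.

End GeodesicFactor.

End PositiveMatrices.

Theorem mainTheorem4 (R : rcfType) (d : nat) (P Q : 'M[R[i]]_d) (t : R) :
  pdmx P -> pdmx Q -> 0 <= t -> t <= 1 ->
  gen_fidelity (bw_geodesic P Q t) P Q = uhlmann_fidelity P Q.
Proof.
move=> pdP pdQ t0 t1.
have pdG := gmean_pd (pdmx_inv pdP) pdQ.
have GPG := gmean_riccati (pdmx_inv pdP) pdQ; rewrite invmxK in GPG.
rewrite bw_geodesicE (gen_fidelity_bw_factor pdG t0 t1 pdP GPG).
by rewrite (uhlmann_fidelity_sandwich (pdmx_psd pdP) (pdmx_psd pdG) GPG).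
Qed.
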